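(* Assume the setup below, with the training loss nonincreasing along the trajectory, and let $t_0$ be a time. Suppose that for every time $t\ge t_0$ the set $\{\delta X(s,\alpha(t)):s\in T\}$ satisfies Condition A at time $t$ with constants $\Lambda\ge 1$, $\psi=1$, $0<\phi<1$ and $m_0=0$. Then for every $\varepsilon>0$ there exist $\delta>0$ and $\eta>0$ (depending only on $\Lambda,\phi,K,\varepsilon$) such that, whenever $$\nu(G_\eta(t_0))>1-\delta\quad\text{and}\quad B_{-1}(t_0)=\emptyset,$$ then for all $t\ge t_0$: $$\mathrm{acc}(t)=\nu(G_0(t))\ge 1-\varepsilon,$$ and for every $\eta^*$ with $0<\eta^*<-\log\big(3\Lambda \bar L(t_0)\big)$, $$\nu(G_{\eta^*}(t))>1-\varepsilon-\left(\tfrac34\right)^{-\frac{\log(3\Lambda \bar L(t_0))}{2\eta^*}}.$$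
   Context: Setup. Fix integers $n\ge1$, $K\ge 2$. $T\subset\mathbb R^n$ is a finite set (training set); each $s\in T$ has a class $i(s)\in\{1,\dots,K\}$ and a weight $\nu(s)\in(0,1]$ with $\sum_{s\in T}\nu(s)=1$; for $A\subset T$, $\nu(A)=\sum_{s\in A}\nu(s)$. A parametrized family of maps $X(\cdot,\alpha):\mathbb R^n\to\mathbb R^K$ is given, and the classifier is $p(s,\alpha)=\rho(X(s,\alpha))$ where $\rho$ is the softmax, $p_k(s,\alpha)=e^{X_k(s,\alpha)}/\sum_{j=1}^K e^{X_j(s,\alpha)}$. Define $\delta X(s,\alpha)=X_{i(s)}(s,\alpha)-\max_{j\ne i(s)}X_j(s,\alpha)$ and the cross-entropy loss $\bar L(\alpha)=-\sum_{s\in T}\nu(s)\log p_{i(s)}(s,\alpha)$. A training trajectory is a family of parameters $\alpha(t)$ indexed by times $t$ (e.g. nonnegative integers); write $\bar L(t)=\bar L(\alpha(t))$; ''loss nonincreasing'' means $\bar L(t_2)\le \bar L(t_1)$ whenever $t_2\ge t_1$. Good set of margin $\eta$: $G_\eta(t)=\{s\in T:\delta X(s,\alpha(t))>\eta\}$; bad set: $B_{-\eta}(t)=\{s\in T:\delta X(s,\alpha(t))\le-\eta\}$; accuracy $\mathrm{acc}(t)=\nu(G_0(t))$. Condition A at time $t$ with constants $\Lambda\ge1$, $m_0\ge 0$, $\psi>0$, $0<\phi<1$: letting $\beta(t)=\min_{s\in T}\delta X(s,\alpha(t))$, for $x_1\in\{0,\beta(t)\}$ and every $x_2>x_1$, $$\nu(\{s:\delta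 X(s,\alpha(t))<\tfrac{x_1+x_2}{2}\})-m_0\le \Lambda\,\nu(\{s:\delta X(s,\alpha(t))<x_1\})^{\phi}+\Lambda\,\nu(\{s:\delta X(s,\alpha(t))<x_2\})^{\psi+1}$$ (with the convention $0^\phi=0$). *)

From Stdlib Require Import Reals List Arith.
From Stdlib Require Fin.
Import ListNotations.
Open Scope R_scope.

Fixpoint sumR (m : nat) (f : nat -> R) : R :=
  match m with
  | O => 0
  | S k => sumR k f + f k
  end.

(* Maximum / minimum of a (nonempty) list of reals; 0 for the empty list. *)
Definition Rmax_list (l : list R) : R :=
  match l with nil => 0 | x :: r => fold_right Rmax x r end.
Definition Rmin_list (l : list R) : R :=
  match l with nil => 0 | x :: r => fold_right Rmin x r end.

Definition Rltb (x y : R) : bool := if Rlt_dec x y then true else false.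

(* Power with the convention 0^a = 0 (for a nonnegative base). *)
Definition rpow0 (x a : R) : R := if Rlt_dec 0 x then Rpower x a else 0.

(* Classes are 0-based: {0,...,K-1}.  Xs : component index -> value. *)
Definition deltaX (K : nat) (Xs : nat -> R) (c : nat) : R :=
  Xs c - Rmax_list (map Xs (filter (fun j => negb (Nat.eqb j c)) (seq 0 K))).

Definition softmax (K : nat) (Xs : nat -> R) (k : nat) : R :=
  exp (Xs k) / sumR K (fun j => exp (Xs j)).

(* Training set indexed by i < m: point pt i, class cls i, weight nu i. *)
Definition nuset (m : nat) (nu : nat -> R) (b : nat -> bool) : R :=
  sumR m (fun i => if b i then nu i else 0).

Definition dXt {n : nat} {P : Type} (K : nat) (X : P -> (Fin.t n -> R) -> nat -> R)
  (pt : nat -> (Fin.t n -> R)) (cls : nat -> nat) (alpha : nat -> P)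
  (t : nat) (i : nat) : R :=
  deltaX K (X (alpha t) (pt i)) (cls i).

Definition Lbar {n : nat} {P : Type} (K m : nat) (X : P -> (Fin.t n -> R) -> nat -> R)
  (pt : nat -> (Fin.t n -> R)) (cls : nat -> nat) (nu : nat -> R) (alpha : nat -> P)
  (t : nat) : R :=
  - sumR m (fun i => nu i * ln (softmax K (X (alpha t) (pt i)) (cls i))).

Definition condA (m : nat) (nu : nat -> R) (d : nat -> R)
  (Lam m0 psi phi : R) : Prop :=
  let beta := Rmin_list (map d (seq 0 m)) in
  forall x1 : R, (x1 = 0 \/ x1 = beta) ->
  forall x2 : R, x1 < x2 ->
    nuset m nu (fun i => Rltb (d i) ((x1 + x2) / 2)) - m0 <=
      Lam * rpow0 (nuset m nu (fun i => Rltb (d i) x1)) phi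
      + Lam * rpow0 (nuset m nu (fun i => Rltb (d i) x2)) (psi + 1).

(* The cross-entropy of a sample with margin d lies between ln (1 + e^-d) and K e^-d.
   Margins > -1 everywhere and margin > eta on a mass > 1 - delta therefore make
   L(t0) as small as desired, and L(t) <= L(t0).  By Markov's inequality the mass of
   margin <= a at time t is at most 2 e^a L(t0): a = 0 gives the accuracy bound, and
   a = eta* gives at most (2/3) e^(eta* + ln u) with u = 3 Lam L(t0), which is at most
   sqrt u <= eps when 2 eta* < -ln u, while otherwise the power of 3/4 is >= 3/4. *)
From Stdlib Require Import Reals List Lra Lia.
From Stdlib Require Fin.
Import ListNotations.
Open Scope R_scope.

Lemma sumR_ext m f g : (forall i, (i < m)%nat -> f i = g i) -> sumR m f = sumR m g.
Proof.
  induction m as [|m IH]; simpl; intros H; [reflexivity|].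
  rewrite IH by (intros; apply H; lia). rewrite H by lia. reflexivity.
Qed.

Lemma sumR_le m f g : (forall i, (i < m)%nat -> f i <= g i) -> sumR m f <= sumR m g.
Proof.
  induction m as [|m IH]; simpl; intros H; [lra|].
  assert (sumR m f <= sumR m g) by (apply IH; intros; apply H; lia).
  assert (f m <= g m) by (apply H; lia). lra.
Qed.

Lemma sumR_plus m f g : sumR m (fun i => f i + g i) = sumR m f + sumR m g.
Proof. induction m as [|m IH]; simpl; [lra|]. rewrite IH; lra. Qed.

Lemma sumR_scal m a f : sumR m (fun i => a * f i) = a * sumR m f.
Proof. induction m as [|m IH]; simpl; [lra|]. rewrite IH; lra. Qed.

Lemma sumR_opp m f : sumR m (fun i => - f i) = - sumR m f.
Proof. induction m as [|m IH]; simpl; [lra|]. rewrite IH; lra. Qed.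

Lemma sumR_const m a : sumR m (fun _ => a) = INR m * a.
Proof. induction m as [|m IH]; simpl sumR; [simpl; lra|]. rewrite IH, S_INR; lra. Qed.

Lemma sumR_nonneg m f : (forall i, (i < m)%nat -> 0 <= f i) -> 0 <= sumR m f.
Proof. intros H. rewrite <- (Rmult_0_r (INR m)), <- sumR_const. apply sumR_le; auto. Qed.

Lemma sumR_ge_term m f k :
  (forall i, (i < m)%nat -> 0 <= f i) -> (k < m)%nat -> f k <= sumR m f.
Proof.
  induction m as [|m IH]; simpl; intros H Hk; [lia|].
  assert (0 <= sumR m f) by (apply sumR_nonneg; intros; apply H; lia).
  assert (0 <= f m) by (apply H; lia).
  destruct (Nat.eq_dec k m) as [->|Hkm]; [lra|].
  assert (f k <= sumR m f) by (apply IH; [intros; apply H|]; lia). lra.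
Qed.

Lemma sumR_split m f c : (c < m)%nat ->
  sumR m f = f c + sumR m (fun j => if Nat.eqb j c then 0 else f j).
Proof.
  induction m as [|m IH]; intros Hc; [lia|]. simpl.
  destruct (Nat.eq_dec c m) as [->|Hcm].
  - rewrite Nat.eqb_refl,
      (sumR_ext m (fun j => if (j =? m)%nat then 0 else f j) f); [lra|].
    intros i Hi. destruct (Nat.eqb_spec i m); [lia|reflexivity].
  - rewrite IH by lia. destruct (Nat.eqb_spec m c); [lia|lra].
Qed.

Lemma fold_right_Rmax_ge a r x : In x (a :: r) -> x <= fold_right Rmax a r.
Proof.
  induction r as [|b r IH]; simpl; intros Hx.
  - destruct Hx as [<-|[]]; lra.
  - destruct Hx as [<-|[<-|Hx]].
    + eapply Rle_trans; [apply IH; left; reflexivity|apply Rmax_r].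
    + apply Rmax_l.
    + eapply Rle_trans; [apply IH; right; exact Hx|apply Rmax_r].
Qed.

Lemma Rmax_list_ge l x : In x l -> x <= Rmax_list l.
Proof. destruct l as [|a r]; [intros []|apply fold_right_Rmax_ge]. Qed.

Lemma Rmax_list_in l : l <> [] -> In (Rmax_list l) l.
Proof.
  destruct l as [|a r]; [tauto|]. intros _. simpl.
  induction r as [|b r IH]; simpl; [auto|].
  apply Rmax_case; [auto|]. destruct IH; auto.
Qed.

Lemma exp_le_mono a b : a <= b -> exp a <= exp b.
Proof. intros [H| ->]; [left; apply exp_increasing|]; lra. Qed.

Lemma ln_le_mono x y : 0 < x -> x <= y -> ln x <= ln y.
Proof. intros Hx [H| ->]; [left; apply ln_increasing|]; lra. Qed.

Lemma ln_nonpos x : x <= 0 -> ln x = 0.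
Proof. intros H. unfold ln. destruct (Rlt_dec 0 x); [exfalso; lra|reflexivity]. Qed.

Lemma ln_1p_le y : -1 < y -> ln (1 + y) <= y.
Proof.
  intros H. rewrite <- (ln_exp y) at 2. apply ln_le_mono; [lra|].
  pose proof (exp_ineq1_le y). lra.
Qed.

Lemma ln_1p_ge y : 0 <= y -> y / (1 + y) <= ln (1 + y).
Proof.
  intros H.
  assert (Hinv : ln (/ (1 + y)) <= / (1 + y) - 1).
  { replace (/ (1 + y)) with (1 + (/ (1 + y) - 1)) at 1 by ring.
    apply ln_1p_le. assert (0 < / (1 + y)) by (apply Rinv_0_lt_compat; lra). lra. }
  rewrite ln_Rinv in Hinv by lra.
  replace (/ (1 + y) - 1) with (- (y / (1 + y))) in Hinv by (field; lra). lra.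
Qed.

Lemma ln_1p_ge_half y : 0 <= y <= 1 -> y / 2 <= ln (1 + y).
Proof.
  intros H. eapply Rle_trans; [|apply ln_1p_ge; lra].
  unfold Rdiv. apply Rmult_le_compat_l; [lra|]. apply Rinv_le_contravar; lra.
Qed.

Lemma Rpower_ge_base x y : 0 < x < 1 -> 0 <= y <= 1 -> x <= Rpower x y.
Proof.
  intros Hx Hy. unfold Rpower. rewrite <- (exp_ln x) at 1 by lra.
  apply exp_le_mono.
  assert (ln x < 0) by (rewrite <- ln_1; apply ln_increasing; lra). nra.
Qed.

Section SoftmaxLoss.

Variables (K : nat) (Xs : nat -> R) (c : nat).
Hypotheses (HK : (2 <= K)%nat) (Hc : (c < K)%nat).

Definition exp_others : R := sumR K (fun j => if Nat.eqb j c then 0 else exp (Xs j)).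

Let others := map Xs (filter (fun j => negb (Nat.eqb j c)) (seq 0 K)).

Lemma in_others j : (j < K)%nat -> j <> c -> In (Xs j) others.
Proof.
  intros Hj Hjc. apply in_map, filter_In. split; [apply in_seq; lia|].
  destruct (Nat.eqb_spec j c); [lia|reflexivity].
Qed.

Lemma max_others_eq : Rmax_list others = Xs c - deltaX K Xs c.
Proof. unfold deltaX. fold others. ring. Qed.

Lemma max_others_attained :
  exists j, (j < K)%nat /\ j <> c /\ Xs j = Xs c - deltaX K Xs c.
Proof.
  assert (Hne : others <> []).
  { set (j0 := if Nat.eqb c 0 then 1%nat else 0%nat).
    assert (j0 < K /\ j0 <> c)%nat as [Hj0 Hj0c]
      by (unfold j0; destruct (Nat.eqb_spec c 0); lia).
    intros E. pose proof (in_others j0 Hj0 Hj0c) as Hin. rewrite E in Hin. destruct Hin. }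
  pose proof (Rmax_list_in others Hne) as Hin. rewrite max_others_eq in Hin.
  apply in_map_iff in Hin as [j [Ej Hj]]. apply filter_In in Hj as [Hj Hjc].
  apply in_seq in Hj. exists j. repeat split; [lia| |exact Ej].
  destruct (Nat.eqb_spec j c); [discriminate|assumption].
Qed.

Lemma exp_others_bounds :
  exp (Xs c - deltaX K Xs c) <= exp_others <= INR K * exp (Xs c - deltaX K Xs c).
Proof.
  split.
  - destruct max_others_attained as [j [Hj [Hjc <-]]].
    replace (exp (Xs j)) with (if Nat.eqb j c then 0 else exp (Xs j))
      by (destruct (Nat.eqb_spec j c); [lia|reflexivity]).
    apply (sumR_ge_term K (fun i => if Nat.eqb i c then 0 else exp (Xs i)) j); [|exact Hj].
    intros i _. destruct (i =? c)%nat; [lra|left; apply exp_pos].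
  - unfold exp_others. rewrite <- sumR_const. apply sumR_le. intros j Hj.
    destruct (Nat.eqb_spec j c); [left; apply exp_pos|].
    apply exp_le_mono. rewrite <- max_others_eq. apply Rmax_list_ge, in_others; auto.
Qed.

Lemma neg_ln_softmax :
  - ln (softmax K Xs c) = ln (1 + exp_others * exp (- Xs c)).
Proof.
  unfold softmax. rewrite (sumR_split K _ c Hc). fold exp_others.
  pose proof (exp_pos (Xs c)). pose proof (proj1 exp_others_bounds).
  pose proof (exp_pos (Xs c - deltaX K Xs c)).
  rewrite exp_Ropp.
  replace (exp (Xs c) / (exp (Xs c) + exp_others))
    with (/ (1 + exp_others * / exp (Xs c))) by (field; lra).
  rewrite ln_Rinv; [ring|].
  assert (0 < exp_others * / exp (Xs c)) by (apply Rmult_lt_0_compat;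
    [|apply Rinv_0_lt_compat]; lra). lra.
Qed.

Lemma exp_others_scaled_bounds :
  exp (- deltaX K Xs c) <= exp_others * exp (- Xs c) <= INR K * exp (- deltaX K Xs c).
Proof.
  replace (- deltaX K Xs c) with ((Xs c - deltaX K Xs c) + - Xs c) by ring.
  rewrite exp_plus. pose proof (exp_pos (- Xs c)).
  destruct exp_others_bounds. split; nra.
Qed.

Lemma cross_entropy_ge : ln (1 + exp (- deltaX K Xs c)) <= - ln (softmax K Xs c).
Proof.
  rewrite neg_ln_softmax. pose proof (exp_pos (- deltaX K Xs c)).
  apply ln_le_mono; [lra|]. pose proof exp_others_scaled_bounds. lra.
Qed.

Lemma cross_entropy_le : - ln (softmax K Xs c) <= INR K * exp (- deltaX K Xs c).
Proof.
  rewrite neg_ln_softmax. destruct exp_others_scaled_bounds.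
  pose proof (exp_pos (- deltaX K Xs c)).
  eapply Rle_trans; [apply ln_1p_le|]; lra.
Qed.

Lemma cross_entropy_nonneg : 0 <= - ln (softmax K Xs c).
Proof.
  eapply Rle_trans; [|apply cross_entropy_ge]. rewrite <- ln_1.
  pose proof (exp_pos (- deltaX K Xs c)). apply ln_le_mono; lra.
Qed.

Lemma cross_entropy_ge_small_margin a :
  0 <= a -> deltaX K Xs c <= a -> exp (- a) / 2 <= - ln (softmax K Xs c).
Proof.
  intros Ha Hd. eapply Rle_trans; [|apply cross_entropy_ge].
  pose proof (exp_pos (- a)).
  assert (exp (- a) <= 1) by (rewrite <- exp_0; apply exp_le_mono; lra).
  eapply Rle_trans; [apply ln_1p_ge_half; lra|].
  apply ln_le_mono; [lra|]. apply Rplus_le_compat_l, exp_le_mono. lra.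
Qed.

End SoftmaxLoss.

Lemma nuset_compl m nu b : sumR m nu = 1 ->
  nuset m nu b + nuset m nu (fun i => negb (b i)) = 1.
Proof.
  intros H. unfold nuset. rewrite <- sumR_plus, <- H. apply sumR_ext.
  intros i _. destruct (b i); simpl; ring.
Qed.

Lemma nuset_nonneg m nu b : (forall i, (i < m)%nat -> 0 <= nu i) -> 0 <= nuset m nu b.
Proof. intros H. apply sumR_nonneg. intros i Hi. destruct (b i); [apply H; exact Hi|lra]. Qed.

Lemma nuset_markov m nu b f a :
  (forall i, (i < m)%nat -> 0 <= nu i) -> (forall i, (i < m)%nat -> 0 <= f i) ->
  (forall i, (i < m)%nat -> b i = false -> a <= f i) ->
  a * nuset m nu (fun i => negb (b i)) <= sumR m (fun i => nu i * f i).
Proof.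
  intros Hnu Hf Hb. unfold nuset. rewrite <- sumR_scal. apply sumR_le.
  intros i Hi. pose proof (Hnu i Hi). pose proof (Hf i Hi).
  destruct (b i) eqn:E; simpl; [nra|].
  pose proof (Hb i Hi E). nra.
Qed.

Section TrainingLoss.

Variables (n K m : nat) (P : Type) (X : P -> (Fin.t n -> R) -> nat -> R)
  (pt : nat -> (Fin.t n -> R)) (cls : nat -> nat) (nu : nat -> R) (alpha : nat -> P).
Hypotheses (HK : (2 <= K)%nat) (Hcls : forall i, (i < m)%nat -> (cls i < K)%nat)
  (Hnu : forall i, (i < m)%nat -> 0 <= nu i).

Let d := dXt K X pt cls alpha.
Let L := Lbar K m X pt cls nu alpha.

Lemma Lbar_sum t :
  L t = sumR m (fun i => nu i * - ln (softmax K (X (alpha t) (pt i)) (cls i))).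
Proof. unfold L, Lbar. rewrite <- sumR_opp. apply sumR_ext. intros; ring. Qed.

Lemma Lbar_nonneg t : 0 <= L t.
Proof.
  rewrite Lbar_sum. apply sumR_nonneg. intros i Hi.
  apply Rmult_le_pos; [apply Hnu; exact Hi|apply cross_entropy_nonneg; auto].
Qed.

Lemma small_margin_mass_le t a : 0 <= a ->
  nuset m nu (fun i => negb (Rltb a (d t i))) <= 2 * exp a * L t.
Proof.
  intros Ha.
  assert (Hmarkov : exp (- a) / 2 * nuset m nu (fun i => negb (Rltb a (d t i))) <= L t).
  { rewrite Lbar_sum. apply nuset_markov; [exact Hnu| |].
    - intros i Hi. apply cross_entropy_nonneg; auto.
    - intros i Hi Hb. apply cross_entropy_ge_small_margin; auto.
      unfold Rltb in Hb. destruct (Rlt_dec a (d t i)); [discriminate|].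
      unfold d, dXt in *. lra. }
  assert (Hinv : exp a * exp (- a) = 1)
    by (rewrite <- exp_plus, Rplus_opp_r, exp_0; reflexivity).
  set (x := nuset m nu (fun i => negb (Rltb a (d t i)))) in *.
  replace x with (2 * exp a * (exp (- a) / 2 * x))
    by (transitivity ((exp a * exp (- a)) * x); [field|rewrite Hinv; ring]).
  apply Rmult_le_compat_l; [pose proof (exp_pos a); lra|exact Hmarkov].
Qed.

Lemma Lbar_le_margin_mass t eta :
  (forall i, (i < m)%nat -> -1 < d t i) ->
  L t <= INR K * exp (- eta) * nuset m nu (fun i => Rltb eta (d t i))
         + 3 * INR K * nuset m nu (fun i => negb (Rltb eta (d t i))).
Proof.
  intros Hd. rewrite Lbar_sum. unfold nuset. rewrite <- !sumR_scal, <- sumR_plus.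
  apply sumR_le. intros i Hi. pose proof (Hnu i Hi).
  pose proof (cross_entropy_le K (X (alpha t) (pt i)) (cls i) HK (Hcls i Hi)) as Hup.
  fold (dXt K X pt cls alpha t i) d in Hup.
  assert (Hscale : forall B, - ln (softmax K (X (alpha t) (pt i)) (cls i)) <= B ->
            nu i * - ln (softmax K (X (alpha t) (pt i)) (cls i)) <= nu i * B)
    by (intros; apply Rmult_le_compat_l; lra).
  pose proof (pos_INR K).
  unfold Rltb. destruct (Rlt_dec eta (d t i)); simpl.
  - assert (exp (- d t i) <= exp (- eta)) by (apply exp_le_mono; lra).
    assert (nu i * - ln (softmax K (X (alpha t) (pt i)) (cls i))
              <= nu i * (INR K * exp (- eta))) by (apply Hscale; nra).
    lra.
  - assert (exp (- d t i) <= 3).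
    { eapply Rle_trans; [|apply exp_le_3]. apply exp_le_mono.
      pose proof (Hd i Hi). lra. }
    assert (nu i * - ln (softmax K (X (alpha t) (pt i)) (cls i))
              <= nu i * (INR K * 3)) by (apply Hscale; nra).
    lra.
Qed.

Lemma Lbar_le_of_large_margin t c0 eta :
  0 < c0 -> ln (2 * INR K / c0) <= eta -> sumR m nu = 1 ->
  (forall i, (i < m)%nat -> -1 < d t i) ->
  nuset m nu (fun i => Rltb eta (d t i)) > 1 - c0 / (6 * INR K) ->
  L t <= c0.
Proof.
  intros Hc0 Heta Hsum Hd Hgood.
  pose proof (Lbar_le_margin_mass t eta Hd) as Hup.
  pose proof (nuset_compl m nu (fun i => Rltb eta (d t i)) Hsum).
  pose proof (nuset_nonneg m nu (fun i => Rltb eta (d t i)) Hnu).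
  pose proof (nuset_nonneg m nu (fun i => negb (Rltb eta (d t i))) Hnu).
  assert (HKr : 2 <= INR K) by (apply (le_INR 2); exact HK).
  assert (Hexp : INR K * exp (- eta) <= c0 / 2).
  { replace (c0 / 2) with (INR K * exp (- ln (2 * INR K / c0)))
      by (rewrite exp_Ropp, exp_ln by (apply Rdiv_lt_0_compat; lra); field; lra).
    apply Rmult_le_compat_l; [lra|]. apply exp_le_mono. lra. }
  assert (3 * INR K * (c0 / (6 * INR K)) = c0 / 2) by (field; lra).
  pose proof (exp_pos (- eta)). nra.
Qed.

End TrainingLoss.

Lemma margin_tail_bound Lam L0 eps etas bad :
  1 <= Lam -> 0 <= L0 -> 0 <= eps -> 3 * Lam * L0 <= eps * eps ->
  0 < etas < - ln (3 * Lam * L0) -> bad <= 2 * exp etas * L0 ->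
  bad < eps + Rpower (3/4) (- ln (3 * Lam * L0) / (2 * etas)).
Proof.
  intros HLam HL0 Heps Hu [He1 He2] Hbad.
  set (u := 3 * Lam * L0) in *. set (N := - ln u) in *.
  destruct (Rle_or_lt u 0) as [Hu0|Hu0].
  { unfold N in He2. rewrite ln_nonpos in He2 by exact Hu0. lra. }
  assert (HeN : exp (- N) = u) by (unfold N; rewrite Ropp_involutive, exp_ln; auto).
  assert (Hbad' : bad <= 2 / 3 * exp (etas - N)).
  { unfold Rminus. rewrite exp_plus, HeN. unfold u.
    assert (0 <= exp etas * L0) by (pose proof (exp_pos etas); nra).
    nra. }
  assert (0 < Rpower (3/4) (N / (2 * etas))) by apply exp_pos.
  destruct (Rle_or_lt N (2 * etas)) as [Hsmall|Hlarge].
  - assert (exp (etas - N) < 1) by (rewrite <- exp_0; apply exp_increasing; lra).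
    assert (0 <= N / (2 * etas) <= 1).
    { unfold Rdiv. assert (0 < / (2 * etas)) by (apply Rinv_0_lt_compat; lra).
      assert (2 * etas * / (2 * etas) = 1) by (field; lra). split; nra. }
    assert (3/4 <= Rpower (3/4) (N / (2 * etas))) by (apply Rpower_ge_base; lra).
    lra.
  - (* e^(etas - N) <= e^(-N/2) = sqrt u <= eps *)
    assert (exp (etas - N) <= exp (- N / 2)) by (apply exp_le_mono; lra).
    assert (exp (- N / 2) * exp (- N / 2) = u)
      by (rewrite <- exp_plus, <- HeN; f_equal; field).
    pose proof (exp_pos (- N / 2)).
    assert (exp (- N / 2) <= eps) by nra.
    lra.
Qed.

Lemma loss_target_exists Lam eps : 1 <= Lam -> 0 < eps ->
  exists c0, 0 < c0 /\ c0 <= eps / 2 /\ 3 * Lam * c0 <= eps * eps.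
Proof.
  intros HLam Heps. exists (Rmin (eps / 2) (eps * eps / (3 * Lam))).
  split; [apply Rmin_case; [|apply Rdiv_lt_0_compat]; nra|].
  split; [apply Rmin_l|].
  apply Rle_trans with (3 * Lam * (eps * eps / (3 * Lam))).
  - apply Rmult_le_compat_l; [lra|apply Rmin_r].
  - right. field. lra.
Qed.

Theorem theorem1 :
  forall (K : nat) (Lam phi : R),
  (2 <= K)%nat -> 1 <= Lam -> 0 < phi < 1 ->
  forall eps : R, 0 < eps ->
  exists delta eta : R, 0 < delta /\ 0 < eta /\
  forall (n m : nat) (P : Type) (X : P -> (Fin.t n -> R) -> nat -> R)
         (pt : nat -> (Fin.t n -> R)) (cls : nat -> nat) (nu : nat -> R)
         (alpha : nat -> P) (t0 : nat),
    (forall i j, (i < m)%nat -> (j < m)%nat -> pt i = pt j -> i = j) ->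
    (forall i, (i < m)%nat -> (cls i < K)%nat) ->
    (forall i, (i < m)%nat -> 0 < nu i <= 1) ->
    sumR m nu = 1 ->
    (forall t1 t2 : nat, (t1 <= t2)%nat ->
       Lbar K m X pt cls nu alpha t2 <= Lbar K m X pt cls nu alpha t1) ->
    (forall t : nat, (t0 <= t)%nat ->
       condA m nu (dXt K X pt cls alpha t) Lam 0 1 phi) ->
    nuset m nu (fun i => Rltb eta (dXt K X pt cls alpha t0 i)) > 1 - delta ->
    (forall i, (i < m)%nat -> -1 < dXt K X pt cls alpha t0 i) ->
    forall t : nat, (t0 <= t)%nat ->
      nuset m nu (fun i => Rltb 0 (dXt K X pt cls alpha t i)) >= 1 - eps /\
      forall etas : R,
        0 < etas < - ln (3 * Lam * Lbar K m X pt cls nu alpha t0) ->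
        nuset m nu (fun i => Rltb etas (dXt K X pt cls alpha t i)) >
          1 - eps - Rpower (3/4)
                      (- ln (3 * Lam * Lbar K m X pt cls nu alpha t0) / (2 * etas)).
Proof.
  intros K Lam phi HK HLam _ eps Heps.
  destruct (loss_target_exists Lam eps HLam Heps) as [c0 [Hc0 [Hc0_acc Hc0_sq]]].
  assert (HKr : 2 <= INR K) by (apply (le_INR 2); exact HK).
  exists (c0 / (6 * INR K)), (Rmax 1 (ln (2 * INR K / c0))).
  split; [apply Rdiv_lt_0_compat; lra|].
  split; [eapply Rlt_le_trans; [|apply Rmax_l]; lra|].
  intros n m P X pt cls nu alpha t0 _ Hcls Hnu Hsum Hmono _ Hgood Hbad t Ht.
  assert (Hnu0 : forall i, (i < m)%nat -> 0 <= nu i) by (intros i Hi; apply Hnu in Hi; lra).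
  set (L := Lbar K m X pt cls nu alpha).
  set (d := dXt K X pt cls alpha t).
  assert (HL0 : L t0 <= c0)
    by (apply (Lbar_le_of_large_margin n K m P X pt cls nu alpha HK Hcls Hnu0 t0 c0
          (Rmax 1 (ln (2 * INR K / c0)))); auto using Rmax_r).
  pose proof (Lbar_nonneg n K m P X pt cls nu alpha HK Hcls Hnu0 t0) as HL0_nonneg.
  assert (Hmass : forall a, 0 <= a ->
            nuset m nu (fun i => negb (Rltb a (d i))) <= 2 * exp a * L t0).
  { intros a Ha. eapply Rle_trans;
      [apply (small_margin_mass_le n K m P X pt cls nu alpha HK Hcls Hnu0 t a Ha)|].
    apply Rmult_le_compat_l; [pose proof (exp_pos a); lra|exact (Hmono t0 t Ht)]. }
  split.
  - pose proof (Hmass 0 (Rle_refl 0)) as Hmass0. rewrite exp_0 in Hmass0.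
    pose proof (nuset_compl m nu (fun i => Rltb 0 (d i)) Hsum). lra.
  - intros etas Hetas.
    pose proof (nuset_compl m nu (fun i => Rltb etas (d i)) Hsum).
    pose proof (margin_tail_bound Lam (L t0) eps etas _ HLam HL0_nonneg ltac:(lra)
      ltac:(nra) Hetas (Hmass etas ltac:(lra))).
    lra.
Qed.
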